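(* Let $G$ be a small category and $X$ a set with a partial category action by $G$, and let $Y = \overline{X}/\simeq$ as defined below. For $g\in{\rm mor}(G)$ and $(h,x)\in\overline{X}$, declare $g\cdot[h,x]$ defined if and only if there is $(h',x')\in\overline{X}$ with $(h,x)\simeq(h',x')$ and $(g,h')\in G^2$, and in that case put $g\cdot[h,x] = [gh',x']$. Then this is a well-defined global category action by $G$ on $Y$.
   Context: Conventions: $G$ is a small category; objects are identified with their identity morphisms, so ${\rm ob}(G)\subseteq{\rm mor}(G)$; $d(g), c(g)$ are domain and codomain, $G^2=\{(g,h)\mid d(g)=c(h)\}$. A partial category action by $G$ on $X$ is a partial function ${\rm mor}(G)\times X\to X$, $(g,x)\mapsto g\cdot x$ where defined, such that: (C1) for every $x$ there is $e\in{\rm ob}(G)$ with $e\cdot x$ defined, and whenever $f\in{\rm ob}(G)$ and $f\cdot x$ is defined, $f\cdot x=x$; (C2) if $g\cdot x$ is defined then $d(g)\cdot x$ is defined; (C3) if $(g,h)\in G^2$ and $h\cdot x$ is defined, then $(gh)\cdot x$ is defined iff $g\cdot(h\cdot x)$ is defined, and then they are equal. It is global if (C4): whenever $d(g)\cdot x$ is defined, $g\cdot x$ is defined. Let $\overline{X} = \{(g,x)\in{\rm mor}(G)\times X\mid d(g)\cdot x\text{ defined}\}$. Define $(g,x)\sim(g',x')$ on $\overline{X}$ if either (i) there is $h\in{\rm mor}(G)$ with $(g',h)\in G^2$, $h\cdot x$ defined, $g=g'h$ and $x'=h\cdot x$; or (ii) $x=x'$, $g,g'\in{\rm ob}(G)$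 and both $g\cdot x$ and $g'\cdot x'$ are defined. Let $\simeq$ be the equivalence relation generated by $\sim$, $Y=\overline{X}/\simeq$, and $[g,x]$ the class of $(g,x)$. *)

From Stdlib Require Import Relations.

Set Implicit Arguments.

(* A small category, given by its set of morphisms; objects are identified
   with their identity morphisms via the predicate [ob]. Composition [comp g h]
   (= gh, first h then g) is a total function but only meaningful when
   [dom g = cod h]. *)
Record category := Category {
  mor : Type;
  ob : mor -> Prop;
  dom : mor -> mor;
  cod : mor -> mor;
  comp : mor -> mor -> mor;
  dom_ob : forall g, ob (dom g);
  cod_ob : forall g, ob (cod g);
  ob_dom : forall e, ob e -> dom e = e;
  ob_cod : forall e, ob e -> cod e = e;
  comp_dom : forall g h, dom g = cod h -> dom (comp g h) = dom h;
  comp_cod : forall g h, dom g = cod h -> cod (comp g h) = cod g;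
  comp_id_r : forall g, comp g (dom g) = g;
  comp_id_l : forall g, comp (cod g) g = g;
  comp_assoc : forall f g h, dom f = cod g -> dom g = cod h ->
    comp f (comp g h) = comp (comp f g) h
}.

Section Actions.
Variable G : category.

Definition composable (g h : mor G) : Prop := dom G g = cod G h.

(* A partial map mor(G) x X -> X is represented by its graph
   [act g x y] meaning "g . x is defined and equals y". *)
Definition pdefined (X : Type) (act : mor G -> X -> X -> Prop) g x : Prop :=
  exists y, act g x y.

Definition partial_category_action (X : Type) (act : mor G -> X -> X -> Prop) : Prop :=
  (forall g x y z, act g x y -> act g x z -> y = z) /\
  (forall x, exists e, ob G e /\ pdefined act e x) /\
  (forall f x y, ob G f -> act f x y -> y = x) /\
  (forall g x, pdefined act g x -> pdefined act (dom G g) x) /\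
  (forall g h x y, composable g h -> act h x y ->
     (pdefined act (comp G g h) x <-> pdefined act g y) /\
     (forall z w, act (comp G g h) x z -> act g y w -> z = w)).

Definition global_category_action (X : Type) (act : mor G -> X -> X -> Prop) : Prop :=
  partial_category_action act /\
  (forall g x, pdefined act (dom G g) x -> pdefined act g x).

Variable X : Type.
Variable act : mor G -> X -> X -> Prop.

Definition Xbar (p : mor G * X) : Prop := pdefined act (dom G (fst p)) (snd p).

Definition sim (p q : mor G * X) : Prop :=
  (exists h, composable (fst q) h /\ act h (snd p) (snd q) /\ fst p = comp G (fst q) h)
  \/ (snd p = snd q /\ ob G (fst p) /\ ob G (fst q) /\
      pdefined act (fst p) (snd p) /\ pdefined act (fst q) (snd q)).

Definition simeq (p q : mor G * X) : Prop :=
  Xbar p /\ Xbar q /\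
  clos_refl_sym_trans _ (fun a b => Xbar a /\ Xbar b /\ sim a b) p q.

(* Y = \overline{X} / \simeq, as the type of equivalence classes *)
Definition Yq : Type :=
  { P : mor G * X -> Prop | exists p, Xbar p /\ P = simeq p }.

(* [h,x] as a predicate; y contains (h,x) iff proj1_sig y (h,x) *)
Definition Yact (g : mor G) (y y' : Yq) : Prop :=
  exists h' x', proj1_sig y (h', x') /\ composable g h' /\
                proj1_sig y' = simeq (comp G g h', x').

End Actions.

From Stdlib Require Import Relations Classical FunctionalExtensionality
  PropExtensionality ProofIrrelevance.

Set Implicit Arguments.

(* The only difficulty is well-definedness: if (h1,x1) ≃ (h2,x2) and g is
   composable with h1 and h2, then (g h1, x1) ≃ (g h2, x2).  A chain of
   ~-steps joining the two pairs may pass through pairs (h,x) with h not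
   composable with g, so we extend "multiply by g" to a partial map [push g]
   on all of X̄: for such (h,x) it uses the representative
   (h,x) ~ (cod h, h·x) ~ (dom g, h·x), whenever these exist.  Each ~-step
   preserves both the domain of [push g] and the ≃-class of its value, hence
   so does ≃.  The action axioms on Y then follow from associativity in G. *)

Section RelationalLifting.
Variables (A B : Type) (F : A -> B -> Prop) (R : relation B).

Definition rel_lift (p q : A) : Prop :=
  (forall r, F p r -> exists s, F q s /\ R r s) /\
  (forall s, F q s -> exists r, F p r /\ R r s).

Hypothesis R_equiv : equivalence B R.

Lemma rel_lift_equiv : equivalence A rel_lift.
Proof.
  destruct R_equiv as [Rrefl Rtrans Rsym].
  split.
  - intros p; split; intros r Hr; exists r; auto.
  - intros p q u [Hpq Hqp] [Hqu Huq]; split.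
    + intros r Hr.
      destruct (Hpq r Hr) as [s [Hs Hrs]]; destruct (Hqu s Hs) as [t [Ht Hst]].
      exists t; split; [exact Ht | exact (Rtrans _ _ _ Hrs Hst)].
    + intros t Ht.
      destruct (Huq t Ht) as [s [Hs Hst]]; destruct (Hqp s Hs) as [r [Hr Hrs]].
      exists r; split; [exact Hr | exact (Rtrans _ _ _ Hrs Hst)].
  - intros p q [Hpq Hqp]; split.
    + intros s Hs; destruct (Hqp s Hs) as [r [Hr Hrs]]; exists r; auto.
    + intros r Hr; destruct (Hpq r Hr) as [s [Hs Hrs]]; exists s; auto.
Qed.

Lemma clos_rst_rel_lift (S : relation A) :
  inclusion A S rel_lift -> inclusion A (clos_refl_sym_trans A S) rel_lift.
Proof.
  destruct rel_lift_equiv as [Lrefl Ltrans Lsym].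
  intros HS p q Hpq; induction Hpq; eauto.
Qed.

Lemma rel_lift_ext p q : (forall r, F p r <-> F q r) -> rel_lift p q.
Proof.
  destruct R_equiv as [Rrefl _ _].
  intros Hpq; split; intros r Hr; exists r; split; auto; apply Hpq; exact Hr.
Qed.

Lemma rel_lift_single p q a b :
  (forall r, F p r <-> r = a) -> (forall s, F q s <-> s = b) -> R a b ->
  rel_lift p q.
Proof.
  intros Hp Hq Hab; split.
  - intros r Hr; exists b; split; [apply Hq; reflexivity|].
    rewrite (proj1 (Hp r) Hr); exact Hab.
  - intros s Hs; exists a; split; [apply Hp; reflexivity|].
    rewrite (proj1 (Hq s) Hs); exact Hab.
Qed.

End RelationalLifting.

Section Quotient.
Variables (G : category) (X : Type) (act : mor G -> X -> X -> Prop).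

Definition sim_step (p q : mor G * X) : Prop :=
  Xbar G act p /\ Xbar G act q /\ sim G act p q.

Notation rst := (clos_refl_sym_trans _ sim_step).

Lemma simeq_sym p q : simeq G act p q -> simeq G act q p.
Proof. intros [Hp [Hq Hpq]]; repeat split; auto; apply rst_sym; exact Hpq. Qed.

Lemma simeq_trans p q r : simeq G act p q -> simeq G act q r -> simeq G act p r.
Proof.
  intros [Hp [_ Hpq]] [_ [Hr Hqr]]; repeat split; auto.
  apply rst_trans with q; assumption.
Qed.

Lemma simeq_refl p : Xbar G act p -> simeq G act p p.
Proof. intros Hp; repeat split; auto; apply rst_refl. Qed.

Lemma simeq_class_eq p q : simeq G act p q -> simeq G act p = simeq G act q.
Proof.
  intros Hpq; apply functional_extensionality; intros r.
  apply propositional_extensionality; split; intros H.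
  - exact (simeq_trans (simeq_sym Hpq) H).
  - exact (simeq_trans Hpq H).
Qed.

Lemma Xbar_comp g h x :
  composable G g h -> Xbar G act (h, x) -> Xbar G act (comp G g h, x).
Proof. intros Hgh Hx; unfold Xbar; simpl; rewrite comp_dom; assumption. Qed.

Lemma composable_comp_l g h k :
  composable G h k -> composable G g h -> composable G g (comp G h k).
Proof. intros Hhk Hgh; unfold composable; rewrite comp_cod; assumption. Qed.

Lemma composable_comp_r g h k :
  composable G g h -> composable G h k -> composable G (comp G g h) k.
Proof. intros Hgh Hhk; unfold composable; rewrite comp_dom; assumption. Qed.

Hypothesis act_partial : partial_category_action G act.

Lemma act_ob_fix f x y : ob G f -> act f x y -> y = x.
Proof. apply act_partial. Qed.

Lemma act_dom_defined g x : pdefined G act g x -> pdefined G act (dom G g) x.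
Proof. apply act_partial. Qed.

Lemma act_comp_defined g h x y :
  composable G g h -> act h x y ->
  (pdefined G act (comp G g h) x <-> pdefined G act g y).
Proof. intros Hgh Hy; apply act_partial; assumption. Qed.

Lemma act_comp_eq g h x y z w :
  composable G g h -> act h x y -> act (comp G g h) x z -> act g y w -> z = w.
Proof. intros Hgh Hy; apply act_partial; assumption. Qed.

Lemma act_comp_iff g h x y w :
  composable G g h -> act h x y -> (act (comp G g h) x w <-> act g y w).
Proof.
  intros Hgh Hy; split; intros Hw.
  - destruct (proj1 (act_comp_defined Hgh Hy) (ex_intro _ w Hw)) as [w' Hw'].
    rewrite (act_comp_eq Hgh Hy Hw Hw'); exact Hw'.
  - destruct (proj2 (act_comp_defined Hgh Hy) (ex_intro _ w Hw)) as [w' Hw'].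
    rewrite <- (act_comp_eq Hgh Hy Hw' Hw); exact Hw'.
Qed.

Definition push (g : mor G) (p r : mor G * X) : Prop :=
  (composable G g (fst p) /\ r = (comp G g (fst p), snd p)) \/
  (~ composable G g (fst p) /\
   exists z, act (fst p) (snd p) z /\ pdefined G act (dom G g) z /\ r = (g, z)).

Lemma push_composable g h x r :
  composable G g h -> (push g (h, x) r <-> r = (comp G g h, x)).
Proof.
  intros Hgh; split.
  - intros [[_ Hr] | [Hn _]]; [exact Hr | contradiction].
  - intros Hr; left; split; assumption.
Qed.

Lemma push_not_composable g h x r :
  ~ composable G g h ->
  (push g (h, x) r <->
   exists z, act h x z /\ pdefined G act (dom G g) z /\ r = (g, z)).
Proof.
  intros Hgh; split.
  - intros [[Hc _] | [_ Hr]]; [contradiction | exact Hr].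
  - intros Hr; right; split; assumption.
Qed.

Lemma push_ob g f x r :
  ob G f -> pdefined G act f x ->
  (push g (f, x) r <-> r = (g, x) /\ pdefined G act (dom G g) x).
Proof.
  intros Hf [x' Hx']; pose proof (act_ob_fix Hf Hx') as Ex'; subst x'.
  destruct (classic (composable G g f)) as [Hgf | Hgf].
  - assert (Egf : f = dom G g) by (unfold composable in Hgf; rewrite ob_cod in Hgf; auto).
    rewrite (push_composable _ _ Hgf), Egf, comp_id_r.
    split; [intros -> | intros [-> _]]; auto.
    split; [reflexivity|]; rewrite <- Egf; exists x; exact Hx'.
  - rewrite (push_not_composable _ _ Hgf); split.
    + intros [z [Hz [Hd ->]]]; rewrite (act_ob_fix Hf Hz) in Hd |- *; auto.
    + intros [-> Hd]; exists x; auto.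
Qed.

Lemma push_sim_comp g h k x z :
  composable G h k -> act k x z -> Xbar G act (h, z) ->
  rel_lift (push g) rst (comp G h k, x) (h, z).
Proof.
  intros Hhk Hz Hh.
  destruct (classic (composable G g h)) as [Hgh | Hgh].
  - apply rel_lift_single with (comp G g (comp G h k), x) (comp G g h, z).
    + intros r; apply push_composable, composable_comp_l; assumption.
    + intros r; apply push_composable; assumption.
    + apply rst_step; repeat split.
      * apply Xbar_comp; [apply composable_comp_l; assumption|].
        apply Xbar_comp; [assumption|]; apply act_dom_defined; exists z; exact Hz.
      * apply Xbar_comp; assumption.
      * left; exists k; simpl; repeat split; [apply composable_comp_r; assumption | exact Hz|].
        apply comp_assoc; assumption.
  - apply rel_lift_ext; [apply clos_rst_is_equiv|]; intros r.
    assert (Hghk : ~ composable G g (comp G h k))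
      by (unfold composable; rewrite comp_cod; assumption).
    rewrite (push_not_composable _ _ Hghk), (push_not_composable _ _ Hgh).
    split; intros [w [Hw Hr]]; exists w; split; try exact Hr.
    + exact (proj1 (act_comp_iff w Hhk Hz) Hw).
    + exact (proj2 (act_comp_iff w Hhk Hz) Hw).
Qed.

Lemma push_sim_step g : inclusion _ sim_step (rel_lift (push g) rst).
Proof.
  intros [h x] [h' x'] [Hp [Hq Hs]]; simpl in Hs.
  destruct Hs as [[k [Hk [Hx Eh]]] | [Ex [Hh [Hh' [Dh Dh']]]]]; simpl in *.
  - subst h; apply push_sim_comp; assumption.
  - subst x'; apply rel_lift_ext; [apply clos_rst_is_equiv|]; intros r.
    rewrite (push_ob g r Hh Dh), (push_ob g r Hh' Dh'); reflexivity.
Qed.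

Lemma simeq_comp g h1 x1 h2 x2 :
  simeq G act (h1, x1) (h2, x2) -> composable G g h1 -> composable G g h2 ->
  simeq G act (comp G g h1, x1) (comp G g h2, x2).
Proof.
  intros [Hp [Hq Hpq]] Hgh1 Hgh2.
  pose proof (clos_rst_rel_lift (clos_rst_is_equiv _ _) (push_sim_step g) Hpq)
    as [Hlift _].
  destruct (Hlift (comp G g h1, x1)) as [s [Hs Hrs]];
    [apply push_composable; auto|].
  rewrite (push_composable _ _ Hgh2) in Hs; subst s.
  repeat split; [apply Xbar_comp.. | exact Hrs]; assumption.
Qed.

Lemma Yq_ext (y1 y2 : Yq G act) : proj1_sig y1 = proj1_sig y2 -> y1 = y2.
Proof. apply eq_sig_hprop; intros; apply proof_irrelevance. Qed.

Lemma Yq_mem_class {y : Yq G act} {p} : proj1_sig y p -> proj1_sig y = simeq G act p.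
Proof. destruct y as [P [q [Hq ->]]]; apply simeq_class_eq. Qed.

Lemma Yq_mem_Xbar {y : Yq G act} {p} : proj1_sig y p -> Xbar G act p.
Proof. destruct y as [P [q [Hq ->]]]; intros [_ [Hp _]]; exact Hp. Qed.

Lemma Yq_inhabited (y : Yq G act) : exists h x, proj1_sig y (h, x).
Proof. destruct y as [P [[h x] [Hp ->]]]; exists h, x; apply simeq_refl, Hp. Qed.

Lemma Yact_defined g (y : Yq G act) :
  pdefined G (@Yact G X act) g y <->
  exists h x, proj1_sig y (h, x) /\ composable G g h.
Proof.
  split.
  - intros [y' [h [x [Hx [Hgh _]]]]]; exists h, x; split; assumption.
  - intros [h [x [Hx Hgh]]].
    assert (Hgx : Xbar G act (comp G g h, x))
      by (apply Xbar_comp; [exact Hgh | exact (Yq_mem_Xbar Hx)]).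
    exists (exist _ (simeq G act (comp G g h, x)) (ex_intro _ _ (conj Hgx eq_refl))).
    exists h, x; repeat split; assumption.
Qed.

Lemma Yact_rep {g} {y y' : Yq G act} {h x} :
  proj1_sig y (h, x) -> composable G g h -> Yact g y y' ->
  proj1_sig y' = simeq G act (comp G g h, x).
Proof.
  intros Hx Hgh [k [z [Hz [Hgk ->]]]].
  apply simeq_class_eq, simeq_comp; [|assumption..].
  rewrite <- (Yq_mem_class Hz); exact Hx.
Qed.

Lemma Yact_mem {g} {y y' : Yq G act} {h x} :
  proj1_sig y (h, x) -> composable G g h -> Yact g y y' ->
  proj1_sig y' (comp G g h, x).
Proof.
  intros Hx Hgh Hy'; rewrite (Yact_rep Hx Hgh Hy').
  apply simeq_refl, Xbar_comp; [exact Hgh | exact (Yq_mem_Xbar Hx)].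
Qed.

Lemma Yact_functional g (y y1 y2 : Yq G act) : Yact g y y1 -> Yact g y y2 -> y1 = y2.
Proof.
  intros [h [x [Hx [Hgh E1]]]] Hy2; apply Yq_ext.
  rewrite E1; symmetry; exact (Yact_rep Hx Hgh Hy2).
Qed.

Lemma Yact_ob_defined (y : Yq G act) :
  exists e, ob G e /\ pdefined G (@Yact G X act) e y.
Proof.
  destruct (Yq_inhabited y) as [h [x Hx]].
  exists (cod G h); split; [apply cod_ob|].
  apply Yact_defined; exists h, x; split; [exact Hx|].
  unfold composable; apply ob_dom, cod_ob.
Qed.

Lemma Yact_ob_fix f (y y' : Yq G act) : ob G f -> Yact f y y' -> y' = y.
Proof.
  intros Hf [h [x [Hx [Hfh E]]]]; apply Yq_ext; rewrite E, (Yq_mem_class Hx).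
  unfold composable in Hfh; rewrite ob_dom in Hfh by exact Hf; subst f.
  rewrite comp_id_l; reflexivity.
Qed.

Lemma Yact_dom_defined_iff g (y : Yq G act) :
  pdefined G (@Yact G X act) (dom G g) y <-> pdefined G (@Yact G X act) g y.
Proof.
  rewrite !Yact_defined; unfold composable; rewrite ob_dom by apply dom_ob.
  reflexivity.
Qed.

Lemma Yact_comp_defined g h (y y1 : Yq G act) :
  composable G g h -> Yact h y y1 ->
  (pdefined G (@Yact G X act) (comp G g h) y <-> pdefined G (@Yact G X act) g y1).
Proof.
  intros Hgh Hy1; pose proof Hy1 as [k [x [Hx [Hhk _]]]].
  rewrite !Yact_defined; split; intros _.
  - exists (comp G h k), x; split; [exact (Yact_mem Hx Hhk Hy1)|].
    apply composable_comp_l; assumption.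
  - exists k, x; split; [exact Hx|]; apply composable_comp_r; assumption.
Qed.

Lemma Yact_comp_eq g h (y y1 z w : Yq G act) :
  composable G g h -> Yact h y y1 -> Yact (comp G g h) y z -> Yact g y1 w -> z = w.
Proof.
  intros Hgh Hy1 Hz Hw; pose proof Hy1 as [k [x [Hx [Hhk _]]]].
  apply Yq_ext.
  rewrite (Yact_rep Hx (composable_comp_r Hgh Hhk) Hz).
  rewrite (Yact_rep (Yact_mem Hx Hhk Hy1) (composable_comp_l Hhk Hgh) Hw).
  rewrite comp_assoc by assumption; reflexivity.
Qed.

End Quotient.

Theorem proposition3p11 (G : category) (X : Type) (act : mor G -> X -> X -> Prop) :
  partial_category_action G act ->
  (* g . [h,x] is defined iff some representative (h',x') has (g,h') in G^2 *)
  (forall (g : mor G) (y : Yq G act),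
     pdefined G (@Yact G X act) g y <->
     exists h' x', proj1_sig y (h', x') /\ composable G g h') /\
  (* and the resulting partial map is well defined and a global category action *)
  global_category_action G (@Yact G X act).
Proof.
  intros Hpa; split; [intros g y; apply Yact_defined|].
  split; [split; [|split; [|split; [|split]]]|].
  - intros g y y1 y2; apply (Yact_functional Hpa).
  - intros y; apply Yact_ob_defined.
  - intros f y y'; apply Yact_ob_fix.
  - intros g y; apply Yact_dom_defined_iff.
  - intros g h y y1 Hgh Hy1; split.
    + exact (Yact_comp_defined Hpa Hgh Hy1).
    + intros z w; exact (Yact_comp_eq Hpa Hgh Hy1).
  - intros g y; apply Yact_dom_defined_iff.
Qed.
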